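(* Let $r\geq 3$. There exists a constant $C$ depending only on $r$ such that the following holds. Let $G$ be an $n$-vertex $K_r$-minor free bipartite graph with vertex partition $A$ and $B$, where $|A|=k$ and $|B|=n-k$. Then $e(G)\leq (r-2)n+Ck$.
   Context: $e(G)$ denotes the number of edges of $G$. A graph is $K_r$-minor free if $K_r$ cannot be obtained from it by vertex deletions, edge deletions and edge contractions. *)

From mathcomp Require Import all_boot.
Set Implicit Arguments. Unset Strict Implicit. Unset Printing Implicit Defensive.

Definition simple_graph (T : finType) (g : rel T) : Prop :=
  symmetric g /\ irreflexive g.

Definition edges (T : finType) (g : rel T) : {set {set T}} :=
  [set [set x; y] | x in T, y in T & g x y].
Definition nedges (T : finType) (g : rel T) : nat := #|edges g|.

Definition connected_in (T : finType) (g : rel T) (S : {set T}) : bool :=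
  [forall x in S, forall y in S,
     connect [rel u v | [&& g u v, u \in S & v \in S]] x y].

Definition has_Kr_minor (T : finType) (g : rel T) (r : nat) : Prop :=
  exists X : 'I_r -> {set T},
    [/\ forall i, X i != set0,
        forall i, connected_in g (X i),
        forall i j, i != j -> [disjoint X i & X j] &
        forall i j, i != j -> exists x y, [/\ x \in X i, y \in X j & g x y]].

Definition bipartite_with (T : finType) (g : rel T) (A : {set T}) : Prop :=
  forall x y, g x y -> (x \in A) != (y \in A).

From mathcomp Require Import all_boot zify.
Set Implicit Arguments. Unset Strict Implicit. Unset Printing Implicit Defensive.

(* Mader's argument gives a constant c_r (mader_bound r) such that every
   K_r-minor-free graph on V has degree sum at most c_r |V|: either some edge xy
   has at most c_(r-1) common neighbours and can be contracted, or the
   neighbourhood of x is dense enough to contain a K_(r-1) minor, which x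
   completes to a K_r minor.
   For the bipartite bound, call a vertex of B heavy if it has at least r - 1
   neighbours; the other vertices of B carry at most (r - 2) n edges. Contract
   the heavy vertices one at a time into neighbours in A. A heavy vertex b
   always has two neighbours that are not yet adjacent in the graph contracted
   onto A, for otherwise they form a clique there that b completes to a K_r
   minor; contracting b onto one of them creates a new edge on A. The graph
   contracted onto A is a K_r-minor-free graph on A, so there are at most
   c_r |A| heavy vertices, and the subgraph induced by A and the heavy vertices
   has degree sum at most c_r (1 + c_r) |A|. *)

Lemma card_bigcup_le (T I : finType) (P : pred I) (F : I -> {set T}) :
  #|\bigcup_(i | P i) F i| <= \sum_(i | P i) #|F i|.
Proof.
elim/big_rec2: _ => [|i n U _ leUn]; first by rewrite cards0.
by rewrite (leq_trans (leq_card_setU _ _).1) ?leq_add2l.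
Qed.

Section Minors.
Variable T : finType.
Implicit Types (g h : rel T) (S U W : {set T}).

Definition induced g S := [rel u v | [&& g u v, u \in S & v \in S]].

Lemma induced_sym g S : symmetric g -> symmetric (induced g S).
Proof. by move=> sg u v; rewrite /= sg (andbC (u \in S)). Qed.

Lemma induced_irr g S : irreflexive g -> irreflexive (induced g S).
Proof. by move=> ig u; rewrite /= ig. Qed.

Lemma induced_sub g S : subrel (induced g S) g.
Proof. by move=> u v /andP []. Qed.

Lemma connected_inP g S :
  reflect {in S &, forall x y, connect (induced g S) x y} (connected_in g S).
Proof.
apply: (iffP 'forall_implyP) => [conn x y xS yS | conn x xS].
  exact: implyP (forallP (conn x xS) y) yS.
by apply/'forall_implyP => y; apply: conn.
Qed.

Lemma connected_in_sub g h S :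
  {in S &, subrel g h} -> connected_in g S -> connected_in h S.
Proof.
move=> sub_gh /connected_inP conn_g; apply/connected_inP => x y xS yS.
apply: connect_sub (conn_g x y xS yS) => u v /and3P [guv uS vS].
by apply: connect1; rewrite /= uS vS sub_gh.
Qed.

Lemma connected_in_star g S c :
  symmetric g -> c \in S -> {in S, forall z, z != c -> g z c} -> connected_in g S.
Proof.
move=> sg cS adj_c; have to_c z : z \in S -> connect (induced g S) z c.
  move=> zS; have [-> | zc] := eqVneq z c; first exact: connect0.
  by apply: connect1; rewrite /= adj_c ?zS ?cS.
apply/connected_inP => x y xS yS; apply: connect_trans (to_c x xS) _.
by rewrite sym_connect_sym ?to_c //; apply: induced_sym.
Qed.

Lemma connected_in1 g x : connected_in g [set x].
Proof. by apply/connected_inP => y z /set1P -> /set1P ->; apply: connect0. Qed.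

Lemma connected_in_bigcup g h (beta : T -> {set T}) S :
  {in S, forall v, connected_in g (beta v)} ->
  (forall u v, h u v -> exists a b, [/\ a \in beta u, b \in beta v & g a b]) ->
  connected_in h S -> connected_in g (\bigcup_(v in S) beta v).
Proof.
move=> beta_conn beta_adj /connected_inP S_conn; set Y := \bigcup_(v in S) _.
have sub_Y v : v \in S -> beta v \subset Y by move=> vS; apply: bigcup_sup.
have in_beta v a b : v \in S -> a \in beta v -> b \in beta v -> connect (induced g Y) a b.
  move=> vS /[swap]; move/connected_inP: (beta_conn v vS) => conn_v bv av.
  apply: connect_sub (conn_v a b av bv) => x y /and3P [gxy xv yv].
  by apply: connect1; rewrite /= gxy !(subsetP (sub_Y v vS)).
apply/connected_inP => a b /bigcupP [u uS au] /bigcupP [w wS bw].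
have /connectP [p] := S_conn u w uS wS.
elim: p u a uS au => [|v p IHp] u a uS au /=.
  by move=> _ wu; rewrite wu in bw; apply: in_beta bw.
case/andP => /and3P [huv _ vS] p_path w_last.
have [a' [b' [a'u b'v ga'b']]] := beta_adj u v huv.
apply: connect_trans (in_beta u a a' uS au a'u) (connect_trans _ (IHp v b' vS b'v p_path w_last)).
by apply: connect1; rewrite /= ga'b' (subsetP (sub_Y u uS)) ?(subsetP (sub_Y v vS)).
Qed.

Definition Kr_model_in g W r (X : 'I_r -> {set T}) :=
  [/\ forall i, X i != set0,
      forall i, connected_in g (X i),
      forall i j, i != j -> [disjoint X i & X j],
      forall i j, i != j -> exists x y, [/\ x \in X i, y \in X j & g x y] &
      forall i, X i \subset W].

Definition has_Kr_minor_in g W r := exists X : 'I_r -> {set T}, Kr_model_in g W X.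

Lemma has_Kr_minor_inT g W r : has_Kr_minor_in g W r -> has_Kr_minor g r.
Proof. by case=> X [*]; exists X. Qed.

Lemma Kr_model_in_sub g h W W' r (X : 'I_r -> {set T}) :
  subrel g h -> W \subset W' -> Kr_model_in g W X -> Kr_model_in h W' X.
Proof.
move=> sub_gh sWW' [X0 Xconn Xdisj Xadj XW]; split=> //.
- by move=> i; apply: connected_in_sub (Xconn i) => x y _ _ /sub_gh.
- move=> i j ij; have [x [y [xi yj gxy]]] := Xadj i j ij.
  by exists x, y; split=> //; apply: sub_gh.
- by move=> i; apply: subset_trans (XW i) sWW'.
Qed.

Lemma Kr_model_in_apex g W r (X : 'I_r -> {set T}) x :
  symmetric g -> Kr_model_in g W X -> x \in W -> (forall i, x \notin X i) ->
  (forall i, exists2 y, y \in X i & g x y) -> has_Kr_minor_in g W r.+1.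
Proof.
move=> sg [X0 Xconn Xdisj Xadj XW] xW xX x_adj.
pose Y i := if unlift ord_max i is Some j then X j else [set x].
exists Y; split=> [i|i|i j|i j|i]; rewrite /Y.
- by case: unliftP => [j _|_]; [exact: X0 | apply/set0Pn; exists x; rewrite set11].
- by case: unliftP => [j _|_]; rewrite ?connected_in1.
- case: unliftP => [i' ->|->]; case: unliftP => [j' ->|->]; rewrite ?eqxx //.
  + by move=> ij; apply: Xdisj; apply: contraNneq ij => ->.
  + by rewrite disjoint_sym disjoints1.
  + by rewrite disjoints1.
- case: unliftP => [i' ->|->]; case: unliftP => [j' ->|->]; rewrite ?eqxx //.
  + by move=> ij; apply: Xadj; apply: contraNneq ij => ->.
  + by have [y yX gxy] := x_adj i'; exists y, x; rewrite set11 sg.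
  + by have [y yX gxy] := x_adj j'; exists x, y; rewrite set11.
- by case: unliftP => [j _|_]; rewrite ?XW ?sub1set.
Qed.

Lemma has_Kr_minor_in_lift g h (beta : T -> {set T}) U W r :
  {in U, forall v, v \in beta v} ->
  {in U, forall v, connected_in g (beta v)} ->
  {in U &, forall u v, u != v -> [disjoint beta u & beta v]} ->
  (forall u v, h u v -> exists a b, [/\ a \in beta u, b \in beta v & g a b]) ->
  {in U, forall v, beta v \subset W} ->
  has_Kr_minor_in h U r -> has_Kr_minor_in g W r.
Proof.
move=> beta_id beta_conn beta_disj beta_adj beta_W [X [X0 Xconn Xdisj Xadj XU]].
have inU i v : v \in X i -> v \in U by apply: (subsetP (XU i)).
pose Y i := \bigcup_(v in X i) beta v.
have sub_Y i v : v \in X i -> beta v \subset Y i by move=> vX; apply: bigcup_sup.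
exists Y; split=> [i|i|i j ij|i j ij|i].
- have [v vX] := set0Pn _ (X0 i).
  by apply/set0Pn; exists v; apply: (subsetP (sub_Y i v vX)); rewrite beta_id ?(inU i).
- apply: connected_in_bigcup (Xconn i) => [v /(inU i)|]; [exact: beta_conn | exact: beta_adj].
- rewrite -setI_eq0; apply/set0Pn => -[z /setIP [/bigcupP [u uX zu] /bigcupP [v vX zv]]].
  have uv : u != v by apply: contraTneq vX => <-; rewrite (disjointFr (Xdisj i j ij)).
  by rewrite (disjointFr (beta_disj u v (inU i u uX) (inU j v vX) uv) zu) in zv.
- have [u [v [uX vX huv]]] := Xadj i j ij; have [a [b [au bv gab]]] := beta_adj u v huv.
  by exists a, b; split=> //; [apply: (subsetP (sub_Y i u uX)) | apply: (subsetP (sub_Y j v vX))].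
- by apply/bigcupsP => v vX; apply: beta_W; apply: inU vX.
Qed.

End Minors.

Section Degrees.
Variable T : finType.
Implicit Types (h : rel T) (S V : {set T}).

Definition nbhd h x := [set y | h x y].

Definition degsum h := \sum_x #|nbhd h x|.

Definition supported h V := forall u v, h u v -> (u \in V) && (v \in V).

Lemma degsum_gt0 h : 0 < degsum h -> exists x y, h x y.
Proof.
case: (pickP (fun x => 0 < #|nbhd h x|)) => [x /card_gt0P [y]|no_nbr].
  by rewrite inE; exists x, y.
by rewrite /degsum big1 // => x _; apply/eqP; rewrite -leqn0 leqNgt no_nbr.
Qed.

Lemma degsum_lt h h' a b : subrel h h' -> h' a b -> ~~ h a b -> degsum h < degsum h'.
Proof.
move=> sub hab' nhab; rewrite /degsum (bigD1 a) // [X in _ < X](bigD1 a) //=.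
have sub_nbhd u : nbhd h u \subset nbhd h' u by apply/subsetP => v; rewrite !inE => /sub.
rewrite -addSn leq_add ?leq_sum // => [|u _]; last exact: subset_leq_card.
by apply: proper_card; apply/properP; split=> //; exists b; rewrite !inE.
Qed.

Lemma supported_induced h S : supported (induced h S) S.
Proof. by move=> u v /and3P [_ -> ->]. Qed.

End Degrees.

Section Contraction.
Variables (T : finType) (h : rel T) (x y : T).
Hypotheses (sh : symmetric h) (ih : irreflexive h) (hxy : h x y).

Definition contract := [rel u v | [&& u != y, v != y, u != v &
  [|| h u v, (u == x) && h y v | (v == x) && h u y]]].

Let common := nbhd h x :&: nbhd h y.

Let x_neq_y : x != y.
Proof. by apply: contraTneq hxy => ->; rewrite ih. Qed.

Lemma contract_sym : symmetric contract.
Proof.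
move=> u v /=; rewrite (eq_sym u v) (sh u v) (sh y v) (sh u y).
by case: (u != y); case: (v != y); case: (v != u) => //=; rewrite [X in _ || X]orbC.
Qed.

Lemma contract_irr : irreflexive contract.
Proof. by move=> u; rewrite /= eqxx !andbF. Qed.

Lemma supported_contract V : supported h V -> supported contract (V :\ y).
Proof.
move=> hV u v /= /and4P [uy vy _ huv]; rewrite !inE uy vy /=.
have /andP [xV _] := hV _ _ hxy.
case/or3P: huv => [/hV // | /andP [/eqP -> /hV /andP [_ ->]] | /andP [/eqP -> /hV /andP [-> _]]];
  by rewrite xV.
Qed.

Lemma has_Kr_minor_in_contract V r :
  supported h V -> has_Kr_minor_in contract (V :\ y) r -> has_Kr_minor_in h V r.
Proof.
move=> hV.
have /andP [xV yV] := hV _ _ hxy.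
pose beta u := if u == x then [set x; y] else [set u].
have beta_id u : u \in beta u by rewrite /beta; case: eqP => [->|_]; rewrite !inE eqxx.
apply: (@has_Kr_minor_in_lift _ h _ beta)
  => [u _ | u _ | u v /setD1P [uy _] /setD1P [vy _] uv | u v | u /setD1P [_ uV]].
- exact: beta_id.
- rewrite /beta; case: eqP => _; last exact: connected_in1.
  by apply: connected_in_star (set21 x y) _ => // z /set2P [->|->]; rewrite ?eqxx // sh.
- rewrite /beta; have [ux | ux] := eqVneq u x; have [vx | vx] := eqVneq v x.
  + by rewrite ux vx eqxx in uv.
  + by rewrite disjoint_sym disjoints1 !inE negb_or vx vy.
  + by rewrite disjoints1 !inE negb_or ux uy.
  + by rewrite disjoints1 inE.
- case/and4P => _ _ _ /or3P [huv | /andP [/eqP -> hyv] | /andP [/eqP -> huy]].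
  + by exists u, v.
  + by exists y, v; rewrite /beta eqxx !inE eqxx orbT beta_id.
  + by exists u, y; rewrite /beta eqxx !inE eqxx orbT beta_id.
- by rewrite /beta; case: eqP => _; rewrite ?subUset !sub1set ?xV ?yV ?uV.
Qed.

Lemma card_nbhd_contract u :
  u != x -> u != y -> #|nbhd h u| <= #|nbhd contract u| + (u \in common).
Proof.
move=> ux uy; have hu_nbhd : nbhd h u :\ y \subset nbhd contract u.
  apply/subsetP => v; rewrite !inE /= => /andP [vy huv]; rewrite uy vy huv andbT /=.
  by apply: contraTneq huv => <-; rewrite ih.
rewrite (cardsD1 y (nbhd h u)) inE.
have [huy | _] := boolP (h u y).
  2: by rewrite add0n (leq_trans (subset_leq_card hu_nbhd)) ?leq_addr.
have [hux | nhux] := boolP (h u x).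
  by rewrite !inE (sh x) hux (sh y) huy addnC leq_add2r subset_leq_card.
have x_new : x |: (nbhd h u :\ y) \subset nbhd contract u.
  by rewrite subUset hu_nbhd sub1set !inE /= ux uy x_neq_y huy eqxx !orbT.
move/subset_leq_card: x_new; rewrite cardsU1 !inE (negbTE nhux) andbF add1n => lt_nbhd.
exact: leq_trans lt_nbhd (leq_addr _ _).
Qed.

Lemma card_nbhd_contract_merged :
  #|nbhd h x| + #|nbhd h y| <= #|nbhd contract x| + 2 + #|common|.
Proof.
have : (nbhd h x :|: nbhd h y) :\ x :\ y \subset nbhd contract x.
  apply/subsetP => v; rewrite !inE => /and3P [vy vx hv].
  by rewrite /= x_neq_y vy eqxx (eq_sym x) vx; case/orP: hv => ->; rewrite ?orbT.
move/subset_leq_card; rewrite /common.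
have := cardsUI (nbhd h x) (nbhd h y); have := cardsD1 x (nbhd h x :|: nbhd h y).
have := cardsD1 y ((nbhd h x :|: nbhd h y) :\ x).
have := leq_b1 (x \in nbhd h x :|: nbhd h y).
have := leq_b1 (y \in (nbhd h x :|: nbhd h y) :\ x); lia.
Qed.

Lemma degsum_contract : degsum h <= degsum contract + 2 + #|common|.*2.
Proof.
pose other u := (u != x) && (u != y).
have split_xy (k : rel T) :
    degsum k = #|nbhd k x| + #|nbhd k y| + \sum_(u | other u) #|nbhd k u|.
  rewrite /degsum (bigD1 x) // (bigD1 y) 1?eq_sym //= addnA.
  by congr (_ + _); apply: eq_bigl => u; rewrite andbC.
have others :
    \sum_(u | other u) #|nbhd h u| <= \sum_(u | other u) #|nbhd contract u| + #|common|.
  apply: (@leq_trans (\sum_(u | other u) (#|nbhd contract u| + (u \in common)))).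
    by apply: leq_sum => u /andP [ux uy]; apply: card_nbhd_contract.
  rewrite big_split leq_add2l -sum1_card big_mkcond [X in _ <= X]big_mkcond.
  by apply: leq_sum => u _; case: (other u); case: (u \in common).
rewrite !split_xy; have := card_nbhd_contract_merged; lia.
Qed.

End Contraction.

Section Mader.
Variable T : finType.
Implicit Types (h : rel T) (V : {set T}).

Lemma degsum_induced_nbhd h x c :
  (exists y, h x y) -> (forall y, h x y -> c < #|nbhd h x :&: nbhd h y|) ->
  c * #|nbhd h x| < degsum (induced h (nbhd h x)).
Proof.
set N := nbhd h x => -[y0 hxy0] rich.
have N_gt0 : 0 < #|N| by apply/card_gt0P; exists y0; rewrite inE.
apply: (@leq_trans (c.+1 * #|N|)); first by rewrite mulSn addnC -addn1 leq_add2l.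
rewrite mulnC -sum_nat_const [X in _ <= X](bigID (mem N)) (leq_trans _ (leq_addr _ _)) //.
apply: leq_sum => u uN; apply: leq_trans (rich u _) _; first by rewrite inE in uN.
by apply: subset_leq_card; apply/subsetP => v; rewrite !inE /= => /andP [hxv ->]; rewrite uN inE.
Qed.

(* The recurrence is what the contraction step needs: contracting an edge whose
   ends have at most c_r common neighbours removes one vertex and at most
   2 c_r + 2 from the degree sum. *)
Fixpoint mader_bound r := if r is r'.+1 then (mader_bound r').*2 + 2 else 0.

Lemma has_Kr_minor_in_dense r h V :
  symmetric h -> irreflexive h -> supported h V ->
  mader_bound r * #|V| < degsum h -> has_Kr_minor_in h V r.
Proof.
elim: r h V => [|r IHr] h V; first by exists (fun=> set0); split=> -[].
have [n ltVn] := ubnP #|V|; elim: n h V ltVn => // n IHn h V ltVn sh ih hV dense.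
have [x [y0 hxy0]] := degsum_gt0 (leq_ltn_trans (leq0n _) dense).
have /andP [xV _] := hV _ _ hxy0.
have [/existsP [y /andP [hxy poor]] | /existsPn rich] :=
  boolP [exists y, h x y && (#|nbhd h x :&: nbhd h y| <= mader_bound r)].
  apply: (has_Kr_minor_in_contract sh hxy hV); have /andP [_ yV] := hV _ _ hxy.
  have cardV := cardsD1 y V; rewrite yV add1n in cardV.
  apply: IHn.
  - by rewrite -ltnS -cardV.
  - exact: contract_sym.
  - exact: contract_irr.
  - exact: supported_contract.
  have mader_rec : mader_bound r.+1 = (mader_bound r).*2 + 2 by [].
  have := degsum_contract sh ih hxy; move: dense poor; rewrite cardV mulnS; lia.
set N := nbhd h x.
have rich' y : h x y -> mader_bound r < #|N :&: nbhd h y|.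
  by move=> hxy; move: (rich y); rewrite hxy ltnNge.
have [X XN] := IHr (induced h N) N (induced_sym _ sh) (induced_irr _ ih)
  (@supported_induced _ h N) (degsum_induced_nbhd (ex_intro _ y0 hxy0) rich').
have [X0 _ _ _ XsubN] := XN.
apply: (Kr_model_in_apex sh (Kr_model_in_sub (@induced_sub _ h N) _ XN) xV) => [|i|i].
- by apply/subsetP => z; rewrite inE => /hV /andP [].
- by apply: contra (subsetP (XsubN i) x) _; rewrite inE ih.
- have [z zX] := set0Pn _ (X0 i).
  by exists z; rewrite // -[h x z]inE (subsetP (XsubN i)).
Qed.

End Mader.

Section Bipartite.
Variables (T : finType) (g : rel T) (A : {set T}).
Hypotheses (sg : symmetric g) (ig : irreflexive g) (bip : bipartite_with g A).
Implicit Types (f : T -> option T) (S : {set T}).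

Lemma bipartite_notin_in x y : g x y -> x \notin A -> y \in A.
Proof. by move/bip; case: (x \in A); case: (y \in A). Qed.

(* A partial map f from B to A encodes the minor of g obtained by contracting
   each b with f b = Some a into its neighbour a: branch f a is the set
   contracted onto a, and contracted f is the resulting graph on A. *)
Definition branch f a := a |: [set b | f b == Some a].

Definition contracted f := [rel u v | [&& u \in A, v \in A, u != v &
  [exists x in branch f u, exists y in branch f v, g x y]]].

Definition attaches f S := forall b a, f b = Some a -> [/\ b \in S, a \in A & g b a].

Lemma contracted_sym f : symmetric (contracted f).
Proof.
move=> u v /=; rewrite eq_sym; case: (u \in A); case: (v \in A); case: (v != u) => //=.
apply/idP/idP => /exists_inP [x xu /exists_inP [y yv gxy]];
  by apply/exists_inP; exists y => //; apply/exists_inP; exists x; rewrite // sg.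
Qed.

Lemma contracted_irr f : irreflexive (contracted f).
Proof. by move=> u; rewrite /= eqxx !andbF. Qed.

Lemma supported_contracted f : supported (contracted f) A.
Proof. by move=> u v /and4P [-> -> _ _]. Qed.

Lemma branch_connected f S a : attaches f S -> connected_in g (branch f a).
Proof.
move=> fS; apply: connected_in_star (setU11 _ _) _ => // z.
by rewrite !inE => /orP [-> // | /eqP /fS [_ _ gza]].
Qed.

Lemma branch_disjoint f S u v :
  attaches f S -> u \in A -> v \in A -> u != v -> [disjoint branch f u & branch f v].
Proof.
move=> fS uA vA uv; rewrite -setI_eq0; apply/set0Pn => -[z].
rewrite !inE => /andP [/orP [/eqP zu | /eqP fzu] /orP [/eqP zv | /eqP fzv]].
- by rewrite -zu -zv eqxx in uv.
- by have [_ _ /bip] := fS _ _ fzv; rewrite zu uA vA.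
- by have [_ _ /bip] := fS _ _ fzu; rewrite zv uA vA.
- by move: fzu; rewrite fzv => -[vu]; rewrite vu eqxx in uv.
Qed.

Lemma has_Kr_minor_contracted f S r :
  attaches f S -> has_Kr_minor_in (contracted f) A r -> has_Kr_minor g r.
Proof.
move=> fS /(has_Kr_minor_in_lift (W := setT) (beta := branch f)) minor.
apply/has_Kr_minor_inT/minor => [u _ | u _ | u v uA vA | u v | u _].
- exact: setU11.
- exact: branch_connected fS.
- by move=> uv; apply: (branch_disjoint fS uA vA uv).
- by case/and4P => _ _ _ /exists_inP [x xu /exists_inP [y yv gxy]]; exists x, y.
- exact: subsetT.
Qed.

Lemma attaches_notin f S b : attaches f S -> b \notin S -> f b = None.
Proof.
by move=> fS bS; case fbE: (f b) => [a|] //; have [] := fS _ _ fbE; rewrite (negbTE bS).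
Qed.

Lemma contracted_mono f f' :
  (forall b a, f b = Some a -> f' b = Some a) -> subrel (contracted f) (contracted f').
Proof.
move=> ff' u v /and4P [uA vA uv /exists_inP [x xu /exists_inP [y yv gxy]]].
have sub_branch w : branch f w \subset branch f' w.
  by apply/subsetP => z; rewrite !inE => /orP [-> // | /eqP /ff' ->]; rewrite eqxx orbT.
rewrite /= uA vA uv; apply/exists_inP; exists x; first exact: (subsetP (sub_branch u)).
by apply/exists_inP; exists y => //; apply: (subsetP (sub_branch v)).
Qed.

Lemma nedges_le_degsum_out : nedges g <= \sum_(x in ~: A) #|nbhd g x|.
Proof.
have cover : edges g \subset \bigcup_(x in ~: A) [set [set x; y] | y in nbhd g x].
  apply/subsetP => e /imset2P [x y _]; rewrite inE => gxy ->.
  have [xA | xA] := boolP (x \in A).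
    apply/bigcupP; exists y; first by rewrite inE; move/bip: gxy; rewrite xA; case: (y \in A).
    by apply/imsetP; exists x; rewrite ?inE 1?sg // setUC.
  by apply/bigcupP; exists x; rewrite ?inE //; apply/imsetP; exists y; rewrite ?inE.
apply: leq_trans (subset_leq_card cover) (leq_trans (card_bigcup_le _ _) _).
by apply: leq_sum => x _; apply: leq_imset_card.
Qed.

Variable r : nat.
Hypothesis no_minor : ~ has_Kr_minor g r.+1.

Definition heavy := [set b | (b \notin A) && (r <= #|nbhd g b|)].

Lemma has_Kr_minor_clique_nbhd f S b :
  attaches f S -> b \notin S -> b \notin A -> r <= #|nbhd g b| ->
  {in nbhd g b &, forall a a', a != a' -> contracted f a a'} -> has_Kr_minor g r.+1.
Proof.
move=> fS bS bA deg_b clique; have fb := attaches_notin fS bS.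
pose a i := enum_val (widen_ord deg_b i : 'I_#|nbhd g b|).
have a_nbhd i : a i \in nbhd g b by apply: enum_valP.
have a_inj : injective a by move=> i j /enum_val_inj [] /val_inj.
have aA i : a i \in A by apply: bipartite_notin_in bA; rewrite -inE.
pose X i := branch f (a i).
have X_model : Kr_model_in g setT X.
  split=> [i | i | i j ij | i j ij | i]; rewrite /X.
  - by apply/set0Pn; exists (a i); apply: setU11.
  - exact: branch_connected fS.
  - by apply: branch_disjoint fS _ _ _; rewrite ?aA ?(inj_eq a_inj).
  - have aij : a i != a j by rewrite (inj_eq a_inj).
    have /and4P [_ _ _ /exists_inP [x xi /exists_inP [y yj gxy]]] :=
      clique _ _ (a_nbhd i) (a_nbhd j) aij.
    by exists x, y.
  - exact: subsetT.
apply/(has_Kr_minor_inT (W := setT))/(Kr_model_in_apex (x := b) sg X_model) => [//|i|i].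
- by rewrite !inE fb negb_or andbT; apply: contraNneq bA => ->.
- by exists (a i); [apply: setU11 | rewrite -inE].
Qed.

Lemma degsum_contracted_extend f S b :
  attaches f S -> b \notin S -> b \in heavy ->
  exists f', attaches f' (b |: S) /\ degsum (contracted f) < degsum (contracted f').
Proof.
move=> fS bS; rewrite inE => /andP [bA deg_b]; have fb := attaches_notin fS bS.
have [/existsP [a /existsP [a' /and4P [gba gba' aa' fresh]]] | /existsPn clique] :=
  boolP [exists a, exists a', [&& g b a, g b a', a != a' & ~~ contracted f a a']]; last first.
  case: no_minor; apply: (has_Kr_minor_clique_nbhd fS bS bA deg_b) => a a'.
  rewrite !inE => ga ga' aa'.
  have nclique := existsPn (clique a) a'.
  by rewrite ga ga' aa' /= negbK in nclique.
have aA := bipartite_notin_in gba bA; have a'A := bipartite_notin_in gba' bA.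
exists (fun z => if z == b then Some a else f z); split.
  move=> z c; case: eqP => [-> [<-] | _ /fS [zS cA gzc]]; first by rewrite setU11 aA.
  by rewrite setU1r.
apply: (degsum_lt (contracted_mono _) _ fresh) => [z c|]; first by case: eqP => [->|//]; rewrite fb.
rewrite /= aA a'A aa'; apply/exists_inP; exists b; first by rewrite !inE /= !eqxx orbT.
by apply/exists_inP; exists a'; rewrite ?setU11.
Qed.

Lemma card_le_degsum_contracted S :
  S \subset heavy -> exists f, attaches f S /\ #|S| <= degsum (contracted f).
Proof.
have [n ltSn] := ubnP #|S|; elim: n S ltSn => // n IHn S ltSn Sheavy.
have [-> | [b bS]] := set_0Vmem S; first by exists (fun=> None); rewrite cards0.
have cardS := cardsD1 b S; rewrite bS add1n in cardS.
have ltSb : #|S :\ b| < n by rewrite -ltnS -cardS.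
have [f [fS le_card]] := IHn (S :\ b) ltSb (subset_trans (subD1set S b) Sheavy).
have [f' [f'S lt_deg]] := degsum_contracted_extend fS (negbT (setD11 b S)) (subsetP Sheavy b bS).
by exists f'; rewrite setD1K // in f'S; rewrite cardS; split=> //; apply: leq_ltn_trans lt_deg.
Qed.

Lemma card_heavy : #|heavy| <= mader_bound r.+1 * #|A|.
Proof.
have [f [fH le_card]] := card_le_degsum_contracted (subxx heavy).
apply: leq_trans le_card _; rewrite leqNgt; apply/negP => dense.
apply/no_minor/(has_Kr_minor_contracted fH)/has_Kr_minor_in_dense => //.
- exact: contracted_sym.
- exact: contracted_irr.
- exact: supported_contracted.
Qed.

Lemma nedges_bipartite_le :
  nedges g <= (r - 1) * #|T| + (mader_bound r.+1 + mader_bound r.+1 * mader_bound r.+1) * #|A|.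
Proof.
set c := mader_bound r.+1; set V := A :|: heavy.
have sparse_V : degsum (induced g V) <= c * #|V|.
  rewrite leqNgt; apply/negP => /has_Kr_minor_in_dense minor; apply: no_minor.
  have [X /(Kr_model_in_sub (@induced_sub _ g V) (subsetT V)) XT] :=
    minor (induced_sym _ sg) (induced_irr _ ig) (@supported_induced _ g V).
  by apply: (has_Kr_minor_inT (W := setT)); exists X.
have deg_out x : x \notin A -> #|nbhd g x| <= (r - 1) + #|nbhd (induced g V) x|.
  move=> xA; case: (leqP r #|nbhd g x|) => [heavy_x | light_x]; last by move: light_x; lia.
  rewrite (leq_trans _ (leq_addl _ _)) // subset_leq_card //; apply/subsetP => y.
  by rewrite !inE /= => gxy; rewrite gxy /V !inE xA heavy_x (bipartite_notin_in gxy xA) orbT /=.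
apply: leq_trans nedges_le_degsum_out _.
apply: (@leq_trans (\sum_(x in ~: A) ((r - 1) + #|nbhd (induced g V) x|))).
  by apply: leq_sum => x; rewrite inE; apply: deg_out.
rewrite big_split sum_nat_const /= mulnC leq_add ?leq_mul2l ?max_card ?orbT //.
apply: leq_trans (_ : _ <= degsum (induced g V)) _.
  by rewrite /degsum [X in _ <= X](bigID (mem (~: A))) leq_addr.
apply: leq_trans sparse_V _; rewrite mulnDl -mulnA -mulnDr leq_mul2l; apply/orP; right.
by apply: leq_trans (leq_card_setU _ _).1 _; rewrite leq_add2l card_heavy.
Qed.

End Bipartite.

Theorem lemma2p5 :
  forall r : nat, 3 <= r ->
  exists C : nat,
    forall (T : finType) (g : rel T) (A : {set T}),
      simple_graph g ->
      ~ has_Kr_minor g r ->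
      bipartite_with g A ->
      nedges g <= (r - 2) * #|T| + C * #|A|.
Proof.
case=> [//|r] _; exists (mader_bound r.+1 + mader_bound r.+1 * mader_bound r.+1).
move=> T g A [sg ig] no_minor bip; rewrite subSS.
exact: nedges_bipartite_le.
Qed.
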